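(* For positive integers $c,r$ let $X_{c,r}$ denote the graph with vertex set $\{x_{i,j}:1\le i\le c,\ 1\le j\le r\}$ (where $i$ is the column and $j$ the row, row $1$ being the bottom row) in which $x_{i,j}x_{i',j'}$ is an edge if and only if $i'=i+1$ and $j\ge j'$. Let $n\ge 1$ and let $M,N$ be positive integers. Then every embedding (as an induced subgraph) of $X_{n,4n-1}$ into $X_{M,N}$ contains a copy of $X_{n,n}$ (an induced subgraph of the image isomorphic to $X_{n,n}$) that occupies exactly $n$ contiguous columns of $X_{M,N}$, with each column of this $X_{n,n}$ embedded into a single column of $X_{M,N}$.
   Context: An embedding of a graph $H$ into a graph $G$ is an injective map $\phi:V(H)\to V(G)$ with $uv\in E(H)$ if and only if $\phi(u)\phi(v)\in E(G)$. The graphs $X_{c,r}$ (called $X$-grids) are as defined in the claim; the column of a vertex $x_{i,j}$ is $i$. *)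

From mathcomp Require Import all_boot.
Set Implicit Arguments. Unset Strict Implicit. Unset Printing Implicit Defensive.

(* Vertex x_{i,j} of X_{c,r} is the pair (i, j) : 'I_c * 'I_r, 0-based:
   column i (0 = leftmost), row j (0 = bottom row). *)
Definition Xvert (c r : nat) := ('I_c * 'I_r)%type.

Definition Xdir (c r : nat) (u v : Xvert c r) : bool :=
  (u.1.+1 == v.1 :> nat) && (v.2 <= u.2).

Definition Xadj (c r : nat) : rel (Xvert c r) :=
  fun u v => Xdir u v || Xdir v u.

Definition col (c r : nat) (u : Xvert c r) : nat := u.1.

Definition is_embedding (T U : Type) (eT : rel T) (eU : rel U) (phi : T -> U) : Prop :=
  injective phi /\ forall u v, eT u v = eU (phi u) (phi v).

From mathcomp Require Import all_boot zify.
Set Implicit Arguments. Unset Strict Implicit. Unset Printing Implicit Defensive.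

(* Fix two consecutive columns of X_{n,R} and let a_j, b_j be the images of x_{i,j}, x_{i+1,j}.
   Each row goes one target column to the right or to the left. The vertex a_{R-1} is adjacent
   to every b_j and b_0 to every a_j; comparing the rows with these two anchors shows that all
   rows but at most one go the same way. If two consecutive pairs of columns went opposite ways,
   two rows following both would turn back through a common middle column and cross. Hence,
   for R >= 5, all pairs share one direction, at most n - 1 rows deviate anywhere, and each
   of the at least 3n remaining rows occupies n contiguous target columns, starting next to
   the image of x_{1,0}. At least n of them start in the same column; restricting to them
   gives X_{n,n}. *)

Definition xadj (u v : nat * nat) : bool :=
  ((u.1.+1 == v.1) && (v.2 <= u.2)) || ((v.1.+1 == u.1) && (u.2 <= v.2)).

Definition coords (c r : nat) (u : Xvert c r) : nat * nat := (u.1 : nat, u.2 : nat).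

Lemma Xadj_coords c r (u v : Xvert c r) : Xadj u v = xadj (coords u) (coords v).
Proof. by []. Qed.

Lemma xadj_succ u v : u.1.+1 = v.1 -> xadj u v = (v.2 <= u.2).
Proof. by move=> e; rewrite /xadj e eqxx (_ : (v.1.+1 == u.1) = false) ?orbF //; lia. Qed.

Lemma xadj_pred u v : v.1.+1 = u.1 -> xadj u v = (u.2 <= v.2).
Proof. by move=> e; rewrite /xadj e eqxx (_ : (u.1.+1 == v.1) = false) //; lia. Qed.

Lemma xadj_far u v : u.1.+1 <> v.1 -> v.1.+1 <> u.1 -> xadj u v = false.
Proof. by move=> /eqP/negbTE e1 /eqP/negbTE e2; rewrite /xadj e1 e2. Qed.

Lemma xadj_near u v : xadj u v -> u.1.+1 = v.1 \/ v.1.+1 = u.1.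
Proof. by case/orP=> /andP[/eqP -> _]; [left | right]. Qed.

(* Turns each [xadj u v] whose column relation [lia] can decide into a comparison of rows;
   the column relations must be split into cases beforehand. *)
Ltac simpl_xadj := repeat match goal with
  | H : context [xadj ?u ?v] |- _ =>
      first [ rewrite (@xadj_succ u v) in H; [|lia]
            | rewrite (@xadj_pred u v) in H; [|lia]
            | rewrite (@xadj_far u v) in H; [|lia|lia] ]
  | |- context [xadj ?u ?v] =>
      first [ rewrite (@xadj_succ u v); [|lia]
            | rewrite (@xadj_pred u v); [|lia]
            | rewrite (@xadj_far u v); [|lia|lia] ]
  end.

Lemma sub_in_count (T : eqType) (a1 a2 : pred T) (s : seq T) :
  {in s, forall x, a1 x -> a2 x} -> count a1 s <= count a2 s.
Proof.
move=> h; rewrite -(@eq_in_count _ (fun x => a1 x && (x \in s))); last first.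
  by move=> x xs; rewrite xs andbT.
by apply: sub_count => x /andP[a1x xs]; apply: h.
Qed.

Lemma count_in_predU (T : eqType) (a a1 a2 : pred T) (s : seq T) :
  {in s, forall x, a x -> a1 x || a2 x} -> count a s <= count a1 s + count a2 s.
Proof.
by move=> h; rewrite -count_predUI; apply: leq_trans (leq_addr _ _); apply: sub_in_count.
Qed.

Lemma increasing_in_iota (P : pred nat) m r : m <= count P (iota 0 r) ->
  exists f : nat -> nat, (forall k, k < m -> f k < r /\ P (f k)) /\
    {in [pred k | k < m] &, {mono f : k l / k <= l}}.
Proof.
rewrite -size_filter => hm; set s := filter P (iota 0 r) in hm.
have s_sorted : sorted ltn s := sorted_filter ltn_trans _ (iota_ltn_sorted 0 r).
exists (nth 0 s); split.
  move=> k /(leq_trans)/(_ hm)/(mem_nth 0); rewrite mem_filter mem_iota add0n.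
  by case/andP=> -> /andP[_ ->].
move=> k l hk hl; apply: (leq_mono_in (sorted_ltn_nth ltn_trans 0 s_sorted));
  by rewrite inE (leq_trans _ hm).
Qed.

Lemma count_iota_gt1 (P : pred nat) r : 1 < count P (iota 0 r) ->
  exists j k, [/\ j < k < r, P j & P k].
Proof.
move=> /increasing_in_iota [f [hf f_mono]].
have [r0 P0] := hf 0 isT; have [r1 P1] := hf 1 isT.
by exists (f 0), (f 1); split; rewrite // ltnNge f_mono.
Qed.

Lemma count_iota_le1 (P : pred nat) m :
  (forall j k, j < k < m -> P j -> P k -> False) -> count P (iota 0 m) <= 1.
Proof.
move=> h; rewrite leqNgt; apply/negP => /count_iota_gt1 [j [k [hjk Pj Pk]]].
exact: h hjk Pj Pk.
Qed.

Lemma count_has_le1 (T1 T2 : eqType) (Q : T1 -> pred T2) (I : seq T1) (s : seq T2) :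
  (forall i, i \in I -> count (Q i) s <= 1) ->
  count (fun x => has (Q ^~ x) I) s <= size I.
Proof.
elim: I => [|i I IH] h /=; first by rewrite count_pred0.
apply: leq_trans (_ : _ <= count (Q i) s + count (fun x => has (Q ^~ x) I) s) _.
  exact: count_in_predU.
rewrite -add1n leq_add ?h ?mem_head // IH // => k kI.
by rewrite h // inE kI orbT.
Qed.

(* [a j] and [b j] are the grid positions of the images of x_{i,j} and x_{i+1,j}. *)
Definition Xpair (R : nat) (a b : nat -> nat * nat) :=
  forall j j', j < R -> j' < R -> xadj (a j) (b j') = (j' <= j).

Ltac row_adj H j j' := move: (H j j' ltac:(lia) ltac:(lia)).

Section AdjacentColumns.

Variables (R : nat) (a b : nat -> nat * nat).
Hypothesis hab : Xpair R a b.

Lemma near_bottom j : j < R -> (a j).1.+1 = (b 0).1 \/ (b 0).1.+1 = (a j).1.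
Proof. by move=> hj; apply: xadj_near; rewrite hab //; lia. Qed.

Lemma near_top j : j < R -> (a R.-1).1.+1 = (b j).1 \/ (b j).1.+1 = (a R.-1).1.
Proof. by move=> hj; apply: xadj_near; rewrite hab //; lia. Qed.

Lemma near_row j : j < R -> (a j).1.+1 = (b j).1 \/ (b j).1.+1 = (a j).1.
Proof. by move=> hj; apply: xadj_near; rewrite hab. Qed.

(* [a R.-1] is adjacent to every [b j] and [b 0] to every [a j]. *)
Definition anchored j := ((a j).1 == (a R.-1).1) && ((b j).1 == (b 0).1).

Lemma anchored_b_below k w : w < k < R -> anchored k ->
  (a w).1 = (a R.-1).1 -> (b w).1 = (b 0).1.
Proof.
move=> hk /andP[/eqP ek /eqP fk] ew.
have [w0|w_gt0] := posnP w; first by rewrite w0.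
have c1 := near_top (ltac:(lia) : 0 < R); have c2 := near_top (ltac:(lia) : w < R).
have c3 := near_bottom (ltac:(lia) : 0 < R).
row_adj hab k k; row_adj hab k w; row_adj hab w w; row_adj hab w k; row_adj hab 0 k;
row_adj hab 0 w; row_adj hab k 0; row_adj hab w 0; row_adj hab 0 0.
case: c1 => c1; case: c2 => c2; case: c3 => c3; simpl_xadj; lia.
Qed.

Lemma anchored_b_above k1 k2 w : k1 < k2 < w -> w < R -> anchored k1 -> anchored k2 ->
  (a w).1 = (a R.-1).1 -> (b w).1 = (b 0).1.
Proof.
move=> hk hw /andP[/eqP e1 /eqP f1] /andP[/eqP e2 /eqP f2] ew.
have c1 := near_top (ltac:(lia) : 0 < R); have c2 := near_top hw.
row_adj hab k1 w; row_adj hab w w; row_adj hab w k2; row_adj hab k1 k2;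
row_adj hab k2 w; row_adj hab w k1.
case: c1 => c1; case: c2 => c2; simpl_xadj; lia.
Qed.

Lemma anchored_a_above k m : k < m < R -> anchored k ->
  (b m).1 = (b 0).1 -> (a m).1 = (a R.-1).1.
Proof.
move=> hm /andP[/eqP ek /eqP fk] fm.
have [-> //|m_top] := eqVneq m R.-1.
have c1 := near_top (ltac:(lia) : 0 < R); have c2 := near_bottom (ltac:(lia) : m < R).
have c3 := near_top (ltac:(lia) : R.-1 < R).
row_adj hab k k; row_adj hab k m; row_adj hab m m; row_adj hab m k; row_adj hab k R.-1;
row_adj hab m R.-1; row_adj hab R.-1 m; row_adj hab R.-1 R.-1; row_adj hab R.-1 k.
case: c1 => c1; case: c2 => c2; case: c3 => c3; simpl_xadj; lia.
Qed.

Lemma anchored_a_below k1 k2 m : m < k1 < k2 -> k2 < R -> anchored k1 -> anchored k2 ->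
  (b m).1 = (b 0).1 -> (a m).1 = (a R.-1).1.
Proof.
move=> hk hk2 /andP[/eqP e1 /eqP f1] /andP[/eqP e2 /eqP f2] fm.
have c1 := near_top (ltac:(lia) : 0 < R); have c2 := near_bottom (ltac:(lia) : m < R).
row_adj hab m k2; row_adj hab m m; row_adj hab k1 m; row_adj hab k1 k2.
case: c1 => c1; case: c2 => c2; simpl_xadj; lia.
Qed.

Lemma anchored_all k1 k2 j : k1 < k2 < R -> anchored k1 -> anchored k2 ->
  j < R -> anchored j.
Proof.
move=> hk ak1 ak2 hj.
have ea : (a j).1 = (a R.-1).1.
  have [e //|/eqP na] := eqVneq (a j).1 (a R.-1).1.
  have := near_top (ltac:(lia) : 0 < R); have := near_bottom hj.
  have := near_top hj; have := near_row hj => c1 c2 c3 c4.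
  have fj : (b j).1 = (b 0).1 by lia.
  case: (ltngtP j k1) => [jk1|k1j|->]; last by case/andP: ak1 => /eqP.
  - by apply: (anchored_a_below (k1 := k1) (k2 := k2)) => //; lia.
  - by apply: (anchored_a_above (k := k1)) => //; lia.
apply/andP; split; apply/eqP => //.
case: (ltngtP j k2) => [jk2|k2j|->]; last by case/andP: ak2 => _ /eqP.
- by apply: (anchored_b_below (k := k2)) => //; lia.
- by apply: (anchored_b_above (k1 := k1) (k2 := k2)) => //; lia.
Qed.

Definition rightward j := (b j).1 == (a j).1 + 1.

Lemma rightward_anchored j : anchored j -> rightward j = ((b 0).1 == (a R.-1).1 + 1).
Proof. by case/andP=> /eqP ea /eqP eb; rewrite /rightward ea eb. Qed.

Lemma rightward_unanchored j : j < R -> ~~ anchored j ->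
  rightward j = ((b 0).1 != (a R.-1).1 + 1).
Proof.
move=> hj; have := near_top (ltac:(lia) : 0 < R); have := near_bottom hj.
have := near_top hj; have := near_row hj; rewrite /anchored /rightward; lia.
Qed.

Lemma rightward_but_one : exists dir, count (fun j => rightward j != dir) (iota 0 R) <= 1.
Proof.
have [le1|gt1] := leqP (count anchored (iota 0 R)) 1.
  exists ((b 0).1 != (a R.-1).1 + 1); apply: leq_trans le1.
  apply: sub_in_count => j; rewrite mem_iota add0n => hj; apply: contraR.
  by move/(rightward_unanchored hj) ->; rewrite eqxx.
have [k1 [k2 [hk ak1 ak2]]] := count_iota_gt1 gt1.
exists ((b 0).1 == (a R.-1).1 + 1); rewrite (@eq_in_count _ _ pred0) ?count_pred0 //.
move=> j; rewrite mem_iota add0n => hj.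
by rewrite /= (rightward_anchored (anchored_all hk ak1 ak2 _)) ?eqxx.
Qed.

(* For R >= 3, by [rightward_but_one], the direction of all rows but at most one. *)
Definition majority := 1 < count rightward (iota 0 R).

Lemma rightward_majority : count (fun j => rightward j != majority) (iota 0 R) <= 1.
Proof.
have [dir hdir] := rightward_but_one.
have count_neg : count (fun j => rightward j != false) (iota 0 R) = count rightward (iota 0 R).
  by apply: eq_count => j; case: rightward.
rewrite /majority; case: ltnP => h; last by rewrite count_neg.
by case: dir hdir => // hdir; move: h; rewrite -count_neg; lia.
Qed.

End AdjacentColumns.

Section ThreeColumns.

Variables (R : nat) (a b c : nat -> nat * nat).
Hypotheses (hab : Xpair R a b) (hbc : Xpair R b c).

Lemma no_crossing j j' : j < j' < R -> (b j).1 = (b j').1 -> (a j).1 = (c j').1 -> False.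
Proof.
move=> hj eb ec.
have c1 := near_row hab (ltac:(lia) : j < R); have c2 := near_row hbc (ltac:(lia) : j' < R).
row_adj hab j j; row_adj hab j j'; row_adj hbc j' j'; row_adj hbc j j'.
case: c1 => c1; case: c2 => c2; simpl_xadj; lia.
Qed.

Lemma majority_turn_column j : j < R -> majority R a b != majority R b c ->
  rightward a b j = majority R a b -> rightward b c j = majority R b c ->
  (a j).1 = (c j).1.
Proof.
move=> hj; have := near_row hab hj; have := near_row hbc hj; rewrite /rightward.
by case: (majority R a b); case: (majority R b c) => //=; lia.
Qed.

Definition follows j :=
  (rightward a b j == majority R a b) && (rightward b c j == majority R b c).

Lemma follows_distinct_cols j j' : majority R a b != majority R b c -> j < j' < R ->
  follows j -> follows j' -> (b j).1 <> (b j').1.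
Proof.
move=> turn hj /andP[/eqP r1 /eqP r2] /andP[/eqP r1' /eqP r2'] eb.
have := majority_turn_column (ltac:(lia) : j' < R) turn r1' r2'.
have := majority_turn_column (ltac:(lia) : j < R) turn r1 r2.
have := near_row hab (ltac:(lia) : j < R); have := near_row hab (ltac:(lia) : j' < R).
move: r1 r1'; rewrite /rightward => r1 r1' c1 c2 ac ac'.
apply: (no_crossing hj eb); lia.
Qed.

Lemma majority_next : 5 <= R -> majority R a b = majority R b c.
Proof.
move=> R5; have [//|turn] := eqVneq (majority R a b) (majority R b c); exfalso.
have few_stray : count (predC follows) (iota 0 R) <= 2.
  apply: leq_trans (count_in_predU _) (leq_add (rightward_majority hab) (rightward_majority hbc)).
  by move=> j _; rewrite /= negb_and.
have many_follow : R - 2 <= count follows (iota 0 R).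
  by have := count_predC follows (iota 0 R); rewrite size_iota; lia.
set t := (a R.-1).1; pose follows_at x j := follows j && ((b j).1 == x).
have split_follow : count follows (iota 0 R) <=
    count (follows_at t.-1) (iota 0 R) + count (follows_at t.+1) (iota 0 R).
  apply: count_in_predU => j; rewrite mem_iota add0n /follows_at => hj ->.
  by have := near_top hab hj; rewrite -/t; lia.
have follows_at_le1 x : count (follows_at x) (iota 0 R) <= 1.
  apply: count_iota_le1 => j j' hj /andP[fj /eqP ej] /andP[fj' /eqP ej'].
  by apply: (follows_distinct_cols turn hj fj fj'); rewrite ej ej'.
by have := follows_at_le1 t.-1; have := follows_at_le1 t.+1; lia.
Qed.

End ThreeColumns.

Definition Xchain n R (F : nat -> nat -> nat * nat) :=
  forall i, i.+1 < n -> Xpair R (F i) (F i.+1).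

Section Chain.

Variables (n R : nat) (F : nat -> nat -> nat * nat).
Hypothesis hF : Xchain n R F.

Lemma majority_const : 5 <= R -> forall i, i.+1 < n ->
  majority R (F i) (F i.+1) = majority R (F 0) (F 1).
Proof.
move=> R5; elim=> // i IH hi.
by rewrite -IH -?(majority_next (hF _) (hF _)) //; lia.
Qed.

Definition straight j :=
  all (fun i => rightward (F i) (F i.+1) j == majority R (F 0) (F 1)) (iota 0 n.-1).

Lemma count_not_straight : 5 <= R -> count (predC straight) (iota 0 R) <= n.-1.
Proof.
move=> R5; rewrite -(size_iota 0 n.-1).
apply: leq_trans (count_has_le1 (I := iota 0 n.-1)
  (Q := fun i j => rightward (F i) (F i.+1) j != majority R (F 0) (F 1)) _).
  by apply: sub_count => j; rewrite /= -has_predC.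
move=> i; rewrite mem_iota add0n => hi; have hi1 : i.+1 < n by lia.
by rewrite -(majority_const R5 hi1); apply/rightward_majority/hF.
Qed.

Lemma straight_col j : j < R -> straight j -> forall i, i < n ->
  if majority R (F 0) (F 1) then (F i j).1 = (F 0 j).1 + i else (F i j).1 + i = (F 0 j).1.
Proof.
move=> hj /allP hs; elim=> [|i IH] hi; first by case: majority; rewrite addn0.
have /eqP := hs i ltac:(rewrite mem_iota; lia).
have := near_row (hF hi) hj; have := IH (ltnW hi); rewrite /rightward.
by case: majority; lia.
Qed.

Definition straight_from c j := straight j && ((F 0 j).1 == c).

Lemma straight_rows_same_start : 1 < n -> 4 * n - 1 <= R ->
  exists c, n <= count (straight_from c) (iota 0 R).
Proof.
move=> n_gt1 hR.
have many_straight : R - n.-1 <= count straight (iota 0 R).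
  have := count_not_straight (ltac:(lia) : 5 <= R).
  by have := count_predC straight (iota 0 R); rewrite size_iota; lia.
set v := (F 1 0).1.
have split_start : count straight (iota 0 R) <=
    count (straight_from v.-1) (iota 0 R) + count (straight_from v.+1) (iota 0 R).
  apply: count_in_predU => j; rewrite mem_iota add0n /straight_from => hj ->.
  by have := near_bottom (hF n_gt1) hj; rewrite -/v; lia.
by case: (leqP n (count (straight_from v.-1) (iota 0 R))) => h; [exists v.-1 | exists v.+1]; lia.
Qed.

Lemma aligned_rows : 0 < n -> 4 * n - 1 <= R ->
  exists (Q : pred nat) (a0 : nat) (d : bool), n <= count Q (iota 0 R) /\
    forall j, j < R -> Q j -> forall i, i < n ->
      (F i j).1 = if d then a0 + i else a0 + n.-1 - i.
Proof.
move=> n_gt0 hR; have [n1|n_gt1] := leqP n 1.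
  exists (pred1 0), (F 0 0).1, true; split.
    by rewrite (count_uniq_mem _ (iota_uniq 0 R)) mem_iota; lia.
  move=> j _ /eqP -> i hi; have -> : i = 0 by lia.
  by rewrite addn0.
have [c hc] := straight_rows_same_start n_gt1 hR.
have /hasP[j0 j0R /andP[s0 /eqP e0]] : has (straight_from c) (iota 0 R).
  by rewrite has_count (leq_trans n_gt0 hc).
rewrite mem_iota add0n in j0R.
have := straight_col (ltac:(lia) : j0 < R) s0 (ltac:(lia) : n.-1 < n); rewrite e0 => top.
exists (straight_from c), (if majority R (F 0) (F 1) then c else c - n.-1).
exists (majority R (F 0) (F 1)).
split=> // j hj /andP[sj /eqP ej] i hi; have := straight_col hj sj hi.
by rewrite ej; move: top; case: majority; lia.
Qed.

End Chain.

Lemma embedding_restrict_rows c m r M N (phi : Xvert c r -> Xvert M N) (sg : 'I_m -> 'I_r) :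
  is_embedding (@Xadj c r) (@Xadj M N) phi ->
  (forall k l : 'I_m, (sg k <= sg l) = (k <= l)) ->
  is_embedding (@Xadj c m) (@Xadj M N) (fun u => phi (u.1, sg u.2)).
Proof.
move=> [phi_inj phi_adj] sg_mono; have sg_inj : injective sg.
  by move=> k l e; apply/val_inj/eqP; rewrite eqn_leq -!sg_mono e leqnn.
split; first by move=> [i k] [i' l] /phi_inj [-> /sg_inj ->].
by move=> u v; rewrite -phi_adj /Xadj /Xdir /= !sg_mono.
Qed.

Lemma contiguous_columns n m M N (psi : Xvert n m -> Xvert M N) (j0 : 'I_m) a0 (d : bool) :
  0 < n -> (forall u, col (psi u) = if d then a0 + u.1 else a0 + n.-1 - u.1) ->
  (forall i : 'I_n, exists k, forall j, col (psi (i, j)) = k) /\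
  exists a, [/\ a + n <= M, (forall v, a <= col (psi v) < a + n) &
                (forall k, a <= k < a + n -> exists v, col (psi v) = k)].
Proof.
rewrite /col => n_gt0 psi_col; split.
  by move=> i; exists (if d then a0 + i else a0 + n.-1 - i) => j; rewrite psi_col.
have n1_lt : n.-1 < n by lia.
pose first : 'I_n := Ordinal n_gt0; pose last : 'I_n := Ordinal n1_lt.
exists a0; split.
- have := ltn_ord (psi (first, j0)).1; have := ltn_ord (psi (last, j0)).1.
  by rewrite !psi_col /=; case: (d); lia.
- by move=> v; rewrite psi_col; have := ltn_ord v.1; case: (d); lia.
move=> k hk; pose i := if d then k - a0 else a0 + n.-1 - k.
have hi : i < n by rewrite /i; case: (d); lia.
by exists (Ordinal hi, j0); rewrite psi_col /= /i; case: (d); lia.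
Qed.

Theorem lemma8 (n M N : nat) (hn : 0 < n) (hM : 0 < M) (hN : 0 < N)
  (phi : Xvert n (4 * n - 1) -> Xvert M N) :
  is_embedding (@Xadj n (4 * n - 1)) (@Xadj M N) phi ->
  exists psi : Xvert n n -> Xvert M N,
    [/\ is_embedding (@Xadj n n) (@Xadj M N) psi,
        (forall v, exists u, psi v = phi u),
        (forall i : 'I_n, exists k, forall j : 'I_n, col (psi (i, j)) = k) &
        exists a, [/\ a + n <= M,
                     (forall v, a <= col (psi v) < a + n) &
                     (forall k, a <= k < a + n -> exists v, col (psi v) = k)]].
Proof.
move=> phi_emb; have R_gt0 : 0 < 4 * n - 1 by lia.
pose i0 : 'I_n := Ordinal hn; pose j0 : 'I_(4 * n - 1) := Ordinal R_gt0.
pose F i j := coords (phi (insubd i0 i, insubd j0 j)).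
have hF : Xchain n (4 * n - 1) F.
  move=> i hi j j' hj hj'.
  by rewrite /F -Xadj_coords -phi_emb.2 /Xadj /Xdir /= !insubdK ?inE //; lia.
have [Q [a0 [d [hQ F_col]]]] := aligned_rows hF hn (leqnn _).
have [f [f_rows f_mono]] := increasing_in_iota hQ.
pose sg (k : 'I_n) : 'I_(4 * n - 1) := Ordinal (proj1 (f_rows k (ltn_ord k))).
pose psi u := phi (u.1, sg u.2).
have psi_col u : col (psi u) = if d then a0 + u.1 else a0 + n.-1 - u.1.
  have [fR fQ] := f_rows u.2 (ltn_ord _).
  rewrite -(F_col _ fR fQ _ (ltn_ord u.1)) /F valKd.
  by congr (phi (_, _)).1; apply: val_inj; rewrite /= insubdK.
have [psi_cols psi_interval] := contiguous_columns i0 hn psi_col.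
exists psi; split=> //; last by move=> v; exists (v.1, sg v.2).
apply: (embedding_restrict_rows phi_emb) => k l.
exact: (f_mono _ _ (ltn_ord k) (ltn_ord l)).
Qed.
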